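(* For any nonzero ring $R$ and any integer $n\ge 2$, the matrix ring $\mathrm{M}_n(R)$ is not a CSNC ring.
   Context: All rings are associative with identity $1$. For a ring $R$, $\mathrm{Id}(R)$, $U(R)$, $\mathrm{Nil}(R)$ denote the sets of idempotents, units and nilpotent elements. An element $a\in R$ is clean if $a=e+u$ for some $e\in\mathrm{Id}(R)$, $u\in U(R)$. An element $a$ is strongly nil-clean if $a=e+q$ with $e\in \mathrm{Id}(R)$, $q\in\mathrm{Nil}(R)$ and $eq=qe$. A ring $R$ is called CSNC if every clean element of $R$ is strongly nil-clean. *)

From mathcomp Require Import all_boot all_order all_algebra.
Set Implicit Arguments. Unset Strict Implicit. Unset Printing Implicit Defensive.
Import GRing.Theory.
Local Open Scope ring_scope.

Definition is_idempotent (R : pzRingType) (e : R) : Prop := e * e = e.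
Definition is_unit_el (R : pzRingType) (u : R) : Prop :=
  exists v : R, u * v = 1 /\ v * u = 1.
Definition is_nilpotent (R : pzRingType) (q : R) : Prop :=
  exists m : nat, q ^+ m = 0.

Definition clean_el (R : pzRingType) (a : R) : Prop :=
  exists e u : R, is_idempotent e /\ is_unit_el u /\ a = e + u.

Definition strongly_nil_clean_el (R : pzRingType) (a : R) : Prop :=
  exists e q : R, is_idempotent e /\ is_nilpotent q /\ e * q = q * e /\ a = e + q.

Definition CSNC (R : pzRingType) : Prop :=
  forall a : R, clean_el a -> strongly_nil_clean_el a.

From mathcomp Require Import all_boot all_order all_algebra.
Set Implicit Arguments. Unset Strict Implicit. Unset Printing Implicit Defensive.
Import GRing.Theory.
Local Open Scope ring_scope.

(* Let a = [[0,1],[1,1]] be the Fibonacci matrix placed in the corner spanned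
   by two distinct indices, and f the identity of that corner, so that
   a^2 = a + f, fa = af = a and f is a nonzero idempotent.  Then
   a = (1 - f) + (a + f - 1) is clean, (a + f - 1)^-1 being a - 1.  But if
   a = e + q with e idempotent and q nilpotent commuting with e, then
   a^2 - a = q (2e + q - 1) is nilpotent, whereas a^2 - a = f is not. *)

Section RingElements.
Variable R : pzRingType.

Lemma strongly_nil_clean_sqr_sub (x : R) :
  strongly_nil_clean_el x -> is_nilpotent (x * x - x).
Proof.
move=> [e [q [e_idem [[m qm0] [eq_qe ->]]]]]; exists m.
have -> : (e + q) * (e + q) - (e + q) = q * (e + e + q - 1).
  rewrite mulrDl !mulrDr e_idem mulrN1 -eq_qe opprD !addrA.
  by rewrite [e + _]addrC 2!(addrAC _ e) addrK.
rewrite exprMn_comm ?qm0 ?mul0r // /GRing.comm.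
by rewrite mulrBr mulrBl mulr1 mul1r !mulrDr !mulrDl eq_qe.
Qed.

Lemma idempotent_nilpotent_eq0 (e : R) :
  is_idempotent e -> is_nilpotent e -> e = 0.
Proof.
move=> e_idem [[|m]]; first by rewrite expr0 => one0; rewrite -[e]mulr1 one0 mulr0.
suff -> : e ^+ m.+1 = e by [].
by elim: m => [|m IHm]; rewrite ?expr1 // exprS IHm e_idem.
Qed.

Section FibonacciElement.
Variables a f : R.
Hypothesis f_idem : is_idempotent f.
Hypothesis mul_fa : f * a = a.
Hypothesis mul_af : a * f = a.
Hypothesis sqr_a : a * a = a + f.

Lemma fibonacci_clean : clean_el a.
Proof.
exists (1 - f), (a + f - 1); split; [|split].
- by rewrite /is_idempotent mulrBl mul1r mulrBr mulr1 f_idem subrr subr0.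
- exists (a - 1); split.
  + by rewrite mulrBr mulr1 !mulrBl !mulrDl sqr_a mul_fa mul1r addrK opprB addrC subrK.
  + by rewrite mulrBl mul1r !mulrBr !mulrDr sqr_a mul_af mulr1 addrK opprB addrC subrK.
- by rewrite addrC addrA subrK addrK.
Qed.

Lemma fibonacci_not_strongly_nil_clean :
  f != 0 -> ~ strongly_nil_clean_el a.
Proof.
move=> /eqP f_neq0 /strongly_nil_clean_sqr_sub.
rewrite sqr_a addrAC subrr add0r.
by move/(idempotent_nilpotent_eq0 f_idem).
Qed.

End FibonacciElement.

End RingElements.

Section FibonacciMatrix.
Variables (R : pzRingType) (n : nat) (i j : 'I_n).
Hypothesis neq_ij : i != j.

Local Notation E := (@delta_mx R n n).

Definition fibonacci_mx : 'M[R]_n := E i j + E j i + E j j.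
Definition corner_id_mx : 'M[R]_n := E i i + E j j.

Lemma delta_mxM (i1 j1 i2 j2 : 'I_n) :
  E i1 j1 * E i2 j2 = E i1 j2 *+ (j1 == i2).
Proof. by rewrite -mulmxE mul_delta_mx_cond. Qed.

Let delta_mx_simpl := (delta_mxM, eqxx, negPf neq_ij, eq_sym j i,
  mulr0n, mulr1n, addr0, add0r, mulrDl, mulrDr).

Lemma corner_id_mx_idem : is_idempotent corner_id_mx.
Proof. by rewrite /is_idempotent /corner_id_mx !delta_mx_simpl. Qed.

Lemma corner_id_mxMl : corner_id_mx * fibonacci_mx = fibonacci_mx.
Proof. by rewrite /corner_id_mx /fibonacci_mx !delta_mx_simpl addrA. Qed.

Lemma corner_id_mxMr : fibonacci_mx * corner_id_mx = fibonacci_mx.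
Proof. by rewrite /corner_id_mx /fibonacci_mx !delta_mx_simpl. Qed.

Lemma fibonacci_mx_sqr : fibonacci_mx * fibonacci_mx = fibonacci_mx + corner_id_mx.
Proof.
by rewrite /corner_id_mx /fibonacci_mx !delta_mx_simpl (AC (3*2) ((2*4*3)*(1*5))).
Qed.

End FibonacciMatrix.

Lemma corner_id_mx_neq0 (R : nzRingType) (n : nat) (i j : 'I_n) :
  i != j -> corner_id_mx R i j != 0.
Proof.
move=> neq_ij; apply/eqP => /matrixP/(_ i i)/eqP.
by rewrite !mxE eqxx (negPf neq_ij) addr0 oner_eq0.
Qed.

Theorem mainTheorem17 (R : nzRingType) (k : nat) : ~ CSNC ('M[R]_(k.+2) : pzRingType).
Proof.
have neq_ij : ord0 != ord_max :> 'I_k.+2 by [].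
have f_idem := corner_id_mx_idem R neq_ij.
have sqr_a := fibonacci_mx_sqr R neq_ij.
move=> csnc; apply: (fibonacci_not_strongly_nil_clean f_idem sqr_a).
  exact: corner_id_mx_neq0.
apply/csnc/(fibonacci_clean f_idem _ _ sqr_a).
  exact: corner_id_mxMl.
exact: corner_id_mxMr.
Qed.
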